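(* For every integer $t\geq 2$ there exist a connected graph $G$ and a function $g:A\to B$ such that $fix(G)-fix(F_G)=t$.
   Context: A set $S\subseteq V(H)$ is a fixing set of a graph $H$ if the only automorphism of $H$ fixing every vertex of $S$ is the identity; $fix(H)$ is the minimum cardinality of a fixing set of $H$. Functigraph: let $G_1,G_2$ be disjoint copies of a connected graph $G$, with $A=V(G_1)$, $B=V(G_2)$, and let $g:A\to B$ be a function. The functigraph $F_G$ has vertex set $A\cup B$ and edge set $E(G_1)\cup E(G_2)\cup\{ug(u):u\in A\}$. *)

From mathcomp Require Import all_boot all_fingroup.
Set Implicit Arguments. Unset Strict Implicit. Unset Printing Implicit Defensive.

Definition simple_graph (T : finType) (e : rel T) : Prop :=
  symmetric e /\ irreflexive e.

Definition connected_graph (T : finType) (e : rel T) : Prop :=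
  0 < #|T| /\ forall x y : T, connect e x y.

Definition is_aut (T : finType) (e : rel T) (s : {perm T}) : bool :=
  [forall x, forall y, e (s x) (s y) == e x y].

Definition fixing_set (T : finType) (e : rel T) (S : {set T}) : bool :=
  [forall s : {perm T}, (is_aut e s && [forall x in S, s x == x]) ==> (s == 1%g)].

Lemma fixing_setT (T : finType) (e : rel T) : fixing_set e [set: T].
Proof.
apply/forallP => s; apply/implyP => /andP [_ /forallP H].
apply/eqP/permP => x; rewrite perm1; exact/eqP/(implyP (H x))/in_setT.
Qed.

Definition fix_number (T : finType) (e : rel T) : nat :=
  #|[arg min_(S < [set: T] | fixing_set e S) #|S|]|.

(* Functigraph F_G: vertices A = inl, B = inr (two copies of T);
   edges E(G1) u E(G2) u {u g(u) : u in A}. *)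
Definition functigraph (T : finType) (e : rel T) (g : T -> T) : rel (T + T) :=
  fun a b =>
    match a, b with
    | inl x, inl y => e x y
    | inr x, inr y => e x y
    | inl x, inr y => g x == y
    | inr y, inl x => g x == y
    end.

From mathcomp Require Import all_boot all_fingroup zify.
Set Implicit Arguments. Unset Strict Implicit. Unset Printing Implicit Defensive.

(* Take for G the broom: a path p_0 ... p_(t+2) with t+1 leaves w_0 ... w_t
   attached at p_0.  The leaves are pairwise twins, so a fixing set misses at
   most one of them; conversely p_0 is the only vertex of maximum degree and
   degrees then force every automorphism to fix the path, so all leaves but one
   form a minimum fixing set and fix(G) = t.  The map g sends p_i to w_(i-1)
   and w_j to p_(j+1), so in F_G every leaf acquires a private neighbour on a
   path.  There the two copies of p_0 have unique degrees, and fixedness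
   propagates from them along both paths and to all leaves (an automorphism
   fixing u permutes the neighbours of u of any given degree), so F_G is rigid
   and fix(F_G) = 0. *)

Section Automorphisms.
Variables (T : finType) (r : rel T).

Definition deg (x : T) : nat := #|[set y | r x y]|.

Definition twins (x y : T) : Prop :=
  (forall z, r x z = r y z) /\ (forall z, r z x = r z y).

Lemma is_autP (s : {perm T}) :
  reflect (forall x y, r (s x) (s y) = r x y) (is_aut r s).
Proof.
apply: (iffP forallP) => [H x y | H x]; first exact/eqP/(forallP (H x)).
by apply/forallP => y; rewrite H.
Qed.

Lemma fixing_setP (S : {set T}) :
  reflect (forall s : {perm T}, is_aut r s -> {in S, forall x, s x = x} -> s = 1%g)
          (fixing_set r S).
Proof.
apply: (iffP forallP) => [H s Ha HS | H s]; last first.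
  by apply/implyP => /andP[Ha /forall_inP HS]; apply/eqP/H => // x /HS/eqP.
by apply/eqP/(implyP (H s)); rewrite Ha; apply/forall_inP => x /HS ->.
Qed.

Lemma aut_deg (s : {perm T}) x : is_aut r s -> deg (s x) = deg x.
Proof.
move/is_autP=> Ha; rewrite /deg -[RHS](card_imset _ (@perm_inj _ s)).
congr #|(_ : {set T})|; apply/setP => y; rewrite inE.
apply/idP/imsetP => [Hy | [z]]; last by rewrite inE => Hz ->; rewrite Ha.
by exists ((s^-1)%g y); rewrite ?permKV // inE -Ha permKV.
Qed.

Lemma perm_fix_but_one (s : {perm T}) v : (forall w, w != v -> s w = w) -> s v = v.
Proof.
move=> H; apply/eqP/negPn/negP => Hne.
by move/perm_inj: (H _ Hne) => Hsv; rewrite Hsv eqxx in Hne.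
Qed.

Lemma aut_fix_deg_unique (s : {perm T}) v :
  is_aut r s -> (forall w, w != v -> deg w != deg v) -> s v = v.
Proof.
move=> Ha H; apply/eqP/negPn/negP => /H.
by rewrite aut_deg // eqxx.
Qed.

(* [s v] is again a neighbour of [u] with the degree of [v]. *)
Lemma aut_fix_neighbor (s : {perm T}) u v :
  is_aut r s -> s u = u -> r u v ->
  (forall w, r u w -> deg w = deg v -> w != v -> s w = w) -> s v = v.
Proof.
move=> Ha Hu Huv H; apply/eqP/negPn/negP => Hne.
have Hsv : r u (s v) by rewrite -Hu (is_autP _ Ha).
by move/perm_inj: (H _ Hsv (aut_deg _ Ha) Hne) => Hsvv; rewrite Hsvv eqxx in Hne.
Qed.

Lemma twins_tperm_aut x y : twins x y -> is_aut r (tperm x y).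
Proof.
move=> [Hl Hr]; apply/is_autP => a b.
have Ht z c : r (tperm x y z) c = r z c by case: tpermP => // ->; rewrite Hl.
have Ht' z c : r c (tperm x y z) = r c z by case: tpermP => // ->; rewrite Hr.
by rewrite Ht Ht'.
Qed.

Lemma fix_number_min (S : {set T}) : fixing_set r S -> fix_number r <= #|S|.
Proof.
by rewrite /fix_number; case: arg_minnP => [|A _ Hmin]; [exact: fixing_setT | apply: Hmin].
Qed.

Lemma fix_number_ge k :
  (forall S : {set T}, fixing_set r S -> k <= #|S|) -> k <= fix_number r.
Proof.
by rewrite /fix_number => H; case: arg_minnP => [|A HA _]; [exact: fixing_setT | apply: H].
Qed.

(* Two twins outside [S] could be swapped by an automorphism fixing [S]. *)
Lemma fixing_set_twins (S W : {set T}) :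
  fixing_set r S -> {in W &, forall x y, twins x y} -> #|W| <= #|S| + 1.
Proof.
move=> /fixing_setP HS Htw.
suff HWS : #|W :\: S| <= 1.
  by rewrite -(cardsID S W) leq_add // subset_leq_card // subsetIr.
rewrite leqNgt; apply/negP => /card_gt1P [x [y [Hx Hy Hxy]]].
move: Hx Hy; rewrite !inE => /andP[HxS HxW] /andP[HyS HyW].
suff Hfix : {in S, forall z, tperm x y z = z}.
  move/permP/(_ x): (HS _ (twins_tperm_aut (Htw _ _ HxW HyW)) Hfix).
  by rewrite tpermL perm1 => Hyx; rewrite Hyx eqxx in Hxy.
by move=> z Hz; apply: tpermD; [apply: contraNneq HxS | apply: contraNneq HyS] => ->.
Qed.

Lemma fix_number_twins (W : {set T}) :
  {in W &, forall x y, twins x y} -> #|W| <= fix_number r + 1.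
Proof.
move=> Htw; rewrite addnC -leq_subLR; apply: fix_number_ge => S HS.
by rewrite leq_subLR addnC fixing_set_twins.
Qed.

Lemma fix_number_rigid :
  (forall s : {perm T}, is_aut r s -> s = 1%g) -> fix_number r = 0.
Proof.
move=> Hrig; apply/eqP; rewrite -leqn0 -(cards0 T); apply: fix_number_min.
by apply/fixing_setP => s Ha _; exact: Hrig.
Qed.

End Automorphisms.

Lemma card_set_sum (A B : finType) (P : pred (A + B)) :
  #|[set z | P z]| = #|[set a | P (inl a)]| + #|[set b | P (inr b)]|.
Proof. by rewrite -!sum1_card big_sumType; congr (_ + _); apply: eq_bigl => ?; rewrite !inE. Qed.

Lemma card_ord_set1 n (P : pred 'I_n) c :
  c < n -> (forall a : 'I_n, P a = (a == c :> nat)) -> #|[set a | P a]| = 1.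
Proof.
move=> Hc HP; have -> : [set a | P a] = [set Ordinal Hc].
  by apply/setP => a; rewrite !inE HP -val_eqE.
exact: cards1.
Qed.

Lemma card_ord_set2 n (P : pred 'I_n) c d :
  c < n -> d < n -> c != d ->
  (forall a : 'I_n, P a = (a == c :> nat) || (a == d :> nat)) -> #|[set a | P a]| = 2.
Proof.
move=> Hc Hd Hcd HP; have -> : [set a | P a] = [set Ordinal Hc; Ordinal Hd].
  by apply/setP => a; rewrite !inE HP -!val_eqE.
by rewrite cards2 -val_eqE /= Hcd.
Qed.

Lemma card_set_const (T : finType) (b : bool) : #|[set _ : T | b]| = b * #|T|.
Proof. by case: b; [rewrite mul1n -cardsT | rewrite mul0n -(cards0 T)]. Qed.

Lemma card_set_pred0 (T : finType) (P : pred T) :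
  (forall a, P a = false) -> #|[set a | P a]| = 0.
Proof. by move=> HP; apply: eq_card0 => a; rewrite inE HP. Qed.

Section Functigraph.
Variables (T : finType) (e : rel T) (g : T -> T).

Lemma functigraph_deg_inl x : deg (functigraph e g) (inl x) = deg e x + 1.
Proof.
rewrite /deg card_set_sum -(cards1 (g x)); congr (_ + #|(_ : {set _})|).
by apply/setP => y; rewrite !inE eq_sym.
Qed.

Lemma functigraph_deg_inr y :
  deg (functigraph e g) (inr y) = deg e y + #|[set x | g x == y]|.
Proof. by rewrite /deg card_set_sum addnC. Qed.

End Functigraph.

Section Broom.
Variable t : nat.

(* [inl i] is the path vertex [p_i] ([i <= t+2]) and [inr j] the leaf [w_j]
   ([j <= t]); all leaves hang at [p_0]. *)
Definition broom_vertex : finType := ('I_t.+3 + 'I_t.+1)%type.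

Definition broom : rel broom_vertex := fun x y =>
  match x, y with
  | inl i, inl j => (i.+1 == j) || (j.+1 == i)
  | inl i, inr _ | inr _, inl i => i == 0 :> nat
  | inr _, inr _ => false
  end.

Definition broom_map (x : broom_vertex) : broom_vertex :=
  match x with
  | inl i => if (0 < i) && (i <= t.+1) then inr (inord i.-1) else inl ord_max
  | inr j => inl (inord j.+1)
  end.
Arguments broom_map : simpl never.

Lemma broom_map_path_path (a b : 'I_t.+3) :
  (broom_map (inl a) == inl b) = ((a == 0 :> nat) || (a == t.+2 :> nat)) && (b == t.+2 :> nat).
Proof.
have Ha := ltn_ord a; have Hb := ltn_ord b; rewrite /broom_map -sum_eqE.
by case: ifP => /= H; rewrite -?val_eqE /=; lia.
Qed.

Lemma broom_map_path_leaf (a : 'I_t.+3) (b : 'I_t.+1) :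
  (broom_map (inl a) == inr b) = (a == b.+1 :> nat).
Proof.
have Ha := ltn_ord a; have Hb := ltn_ord b; rewrite /broom_map -sum_eqE.
by case: ifP => /= H; rewrite -?val_eqE /= ?inordK; lia.
Qed.

Lemma broom_map_leaf_path (a : 'I_t.+1) (b : 'I_t.+3) :
  (broom_map (inr a) == inl b) = (b == a.+1 :> nat).
Proof. by have Ha := ltn_ord a; rewrite /broom_map -sum_eqE /= -val_eqE /= inordK; lia. Qed.

Lemma broom_map_leaf_leaf (a b : 'I_t.+1) : (broom_map (inr a) == inr b) = false.
Proof. by rewrite /broom_map -sum_eqE. Qed.

Definition broom_mapE :=
  (broom_map_path_path, broom_map_path_leaf, broom_map_leaf_path, broom_map_leaf_leaf).


Lemma deg_broom_path (i : 'I_t.+3) :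
  deg broom (inl i) = if i == 0 :> nat then t.+2 else if i <= t.+1 then 2 else 1.
Proof.
have Hi := ltn_ord i; rewrite /deg card_set_sum /= card_set_const card_ord.
case: ifP => Hi0 /=.
  by rewrite (@card_ord_set1 _ _ 1) ?mul1n // => a; lia.
rewrite addn0; case: ifP => Hit.
  by apply: (@card_ord_set2 _ _ i.-1 i.+1) => *; lia.
by apply: (@card_ord_set1 _ _ i.-1) => [|a]; [lia | have := ltn_ord a; lia].
Qed.

Lemma deg_broom_leaf (j : 'I_t.+1) : deg broom (inr j) = 1.
Proof. by rewrite /deg card_set_sum /= card_set_const (@card_ord_set1 _ _ 0). Qed.

Lemma card_broom_map_path (i : 'I_t.+3) :
  #|[set x | broom_map x == inl i]| = if i == 0 :> nat then 0 else if i <= t.+1 then 1 else 2.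
Proof.
have Hi := ltn_ord i; rewrite card_set_sum.
case: ifP => Hi0.
  by rewrite !card_set_pred0 // => a; rewrite broom_mapE; lia.
case: ifP => Hit.
  rewrite card_set_pred0 => [|a]; last by rewrite broom_mapE; lia.
  by apply: (@card_ord_set1 _ _ i.-1) => [|a]; rewrite ?broom_mapE; lia.
rewrite (@card_ord_set2 _ _ 0 t.+2) //; last by move=> a; rewrite broom_mapE; lia.
by rewrite card_set_pred0 // => a; rewrite broom_mapE; have := ltn_ord a; lia.
Qed.

Lemma card_broom_map_leaf (j : 'I_t.+1) : #|[set x | broom_map x == inr j]| = 1.
Proof.
have Hj := ltn_ord j; rewrite card_set_sum (@card_ord_set1 _ _ j.+1); last 2 first.
- lia.
- by move=> a; rewrite broom_mapE eq_sym.
by rewrite card_set_pred0 // => b; rewrite broom_mapE.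
Qed.

Lemma broom_simple : simple_graph broom.
Proof. by split=> [[i|i] [j|j] | [i|i]] //=; lia. Qed.

Lemma broom_connected : connected_graph broom.
Proof.
split; first by rewrite card_sum !card_ord.
have Hsym : connect_sym broom by apply: sym_connect_sym; case: broom_simple.
suff Hroot x : connect broom (inl ord0) x.
  by move=> x y; apply: connect_trans (Hroot y); rewrite Hsym.
case: x => [[i Hi]|j]; last exact: connect1.
elim: i Hi => [|i IH] Hi; first by rewrite (_ : Ordinal Hi = ord0) //; apply: val_inj.
have Hi' : i < t.+3 by lia.
by apply: connect_trans (IH Hi') (connect1 _); rewrite /= eqxx.
Qed.

Ltac normalize_vertex degE :=
  rewrite ?degE /= ?broom_mapE; repeat rewrite -sum_eqE /=; rewrite -?val_eqE /= ?broom_mapE.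

Definition broom_degE := (deg_broom_path, deg_broom_leaf).

Section BroomFixingNumber.
Hypothesis t_gt0 : 0 < t.

Lemma aut_broom_fixes_path s : is_aut broom s -> forall i : 'I_t.+3, s (inl i) = inl i.
Proof.
move=> Ha [i Hi]; elim/ltn_ind: i Hi => i IH Hi.
case: i IH Hi => [|k] IH Hk.
  by apply: (aut_fix_deg_unique Ha) => -[[m Hm]|[m Hm]];
    normalize_vertex broom_degE; repeat case: ifP => ?; lia.
have Hk' : k < t.+3 by lia.
apply: (aut_fix_neighbor Ha (IH k (ltnSn k) Hk')); first by rewrite /= eqxx.
by move=> -[[m Hm]|[m Hm]]; normalize_vertex broom_degE; repeat case: ifP => ?;
  solve [lia | move=> *; apply: IH; lia].
Qed.

Lemma broom_fixing_set : fixing_set broom [set inr j | j in [set~ ord_max]].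
Proof.
apply/fixing_setP => s Ha HS.
have Hother w : w != inr ord_max -> s w = w.
  case: w => [i _ | j Hj]; first exact: aut_broom_fixes_path.
  by apply: HS; apply: imset_f; rewrite !inE; apply: contraNneq Hj => ->.
apply/permP => x; rewrite perm1.
by case: (eqVneq x (inr ord_max)) => [->|]; [exact: perm_fix_but_one | exact: Hother].
Qed.

Lemma fix_number_broom : fix_number broom = t.
Proof.
apply/eqP; rewrite eqn_leq; apply/andP; split.
  have := fix_number_min broom_fixing_set.
  by rewrite card_imset ?cardsC1 ?card_ord //; exact: inr_inj.
rewrite -(leq_add2r 1) addn1 -[t.+1](card_ord t.+1) -cardsT -(card_imset _ (@inr_inj 'I_t.+3 _)).
by apply: fix_number_twins => _ _ /imsetP[a _ ->] /imsetP[b _ ->]; split=> -[].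
Qed.

End BroomFixingNumber.

Local Notation F := (functigraph broom broom_map).

Lemma deg_F_path_inl (i : 'I_t.+3) :
  deg F (inl (inl i)) = if i == 0 :> nat then t.+3 else if i <= t.+1 then 3 else 2.
Proof. by rewrite functigraph_deg_inl deg_broom_path; do 2?case: ifP; rewrite ?addn1. Qed.

Lemma deg_F_leaf_inl (j : 'I_t.+1) : deg F (inl (inr j)) = 2.
Proof. by rewrite functigraph_deg_inl deg_broom_leaf. Qed.

Lemma deg_F_path_inr (i : 'I_t.+3) :
  deg F (inr (inl i)) = if i == 0 :> nat then t.+2 else 3.
Proof.
by rewrite functigraph_deg_inr deg_broom_path card_broom_map_path; do 2?case: ifP => ? //; lia.
Qed.

Lemma deg_F_leaf_inr (j : 'I_t.+1) : deg F (inr (inr j)) = 2.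
Proof. by rewrite functigraph_deg_inr deg_broom_leaf card_broom_map_leaf. Qed.

Definition F_degE := (deg_F_path_inl, deg_F_leaf_inl, deg_F_path_inr, deg_F_leaf_inr).

Section FunctigraphRigidity.
Hypothesis t_gt1 : 1 < t.
Variable s : {perm broom_vertex + broom_vertex}.
Hypothesis Ha : is_aut F s.

Ltac F_vertex_cases :=
  move=> -[[[m Hm]|[m Hm]]|[[m Hm]|[m Hm]]]; normalize_vertex F_degE.

Lemma aut_fixes_rootA : s (inl (inl ord0)) = inl (inl ord0).
Proof. by apply: (aut_fix_deg_unique Ha); F_vertex_cases; repeat case: ifP => ?; lia. Qed.

Lemma aut_fixes_rootB : s (inr (inl ord0)) = inr (inl ord0).
Proof. by apply: (aut_fix_deg_unique Ha); F_vertex_cases; repeat case: ifP => ?; lia. Qed.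

Lemma aut_fixes_pathB (i : 'I_t.+3) : s (inr (inl i)) = inr (inl i).
Proof.
case: i => i Hi; elim/ltn_ind: i Hi => i IH Hi.
case: i IH Hi => [|k] IH Hk.
  by rewrite (_ : Ordinal Hk = ord0) ?aut_fixes_rootB //; apply: val_inj.
have Hk' : k < t.+3 by lia.
apply: (aut_fix_neighbor Ha (IH k (ltnSn k) Hk')); first by rewrite /= eqxx.
by F_vertex_cases; repeat case: ifP => ?; solve [lia | move=> *; apply: IH; lia].
Qed.

Lemma aut_fixes_leafA (j : 'I_t.+1) : s (inl (inr j)) = inl (inr j).
Proof.
case: j => j Hj; have Hj' : j.+1 < t.+3 by lia.
apply: (aut_fix_neighbor Ha (aut_fixes_pathB (Ordinal Hj'))).
  by rewrite /= broom_mapE /= eqxx.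
by F_vertex_cases; repeat case: ifP => ?; solve [lia | move=> *; apply: aut_fixes_pathB].
Qed.

Lemma aut_fixes_endA : s (inl (inl ord_max)) = inl (inl ord_max).
Proof.
apply: (aut_fix_neighbor Ha (aut_fixes_pathB ord_max)); first by rewrite /= broom_mapE /= eqxx.
F_vertex_cases; repeat case: ifP => ?;
  solve [lia | move=> *; apply: aut_fixes_pathB
        | move=> *; rewrite (_ : Ordinal Hm = ord0) ?aut_fixes_rootA //; apply: val_inj => /=; lia].
Qed.

Lemma aut_fixes_pathA (i : 'I_t.+3) : s (inl (inl i)) = inl (inl i).
Proof.
case: i => i Hi; elim/ltn_ind: i Hi => i IH Hi.
case: i IH Hi => [|k] IH Hk.
  by rewrite (_ : Ordinal Hk = ord0) ?aut_fixes_rootA //; apply: val_inj.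
have [Hend | Hmid] := eqVneq k t.+1.
  by rewrite (_ : Ordinal Hk = ord_max) ?aut_fixes_endA //; apply: val_inj; rewrite /= Hend.
have Hk' : k < t.+3 by lia.
apply: (aut_fix_neighbor Ha (IH k (ltnSn k) Hk')); first by rewrite /= eqxx.
by F_vertex_cases; repeat case: ifP => ?;
  solve [lia | move=> *; apply: IH; lia | move=> *; apply: aut_fixes_pathB].
Qed.

Lemma aut_fixes_leafB (j : 'I_t.+1) : s (inr (inr j)) = inr (inr j).
Proof.
case: j => j Hj; have Hj' : j.+1 < t.+3 by lia.
apply: (aut_fix_neighbor Ha (aut_fixes_pathA (Ordinal Hj'))).
  by rewrite /= broom_mapE /= eqxx.
by F_vertex_cases; repeat case: ifP => ?; solve [lia | move=> *; apply: aut_fixes_pathA].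
Qed.

Lemma aut_functigraph_broom_trivial : s = 1%g.
Proof.
apply/permP => -[[i|j]|[i|j]]; rewrite perm1.
- exact: aut_fixes_pathA.
- exact: aut_fixes_leafA.
- exact: aut_fixes_pathB.
- exact: aut_fixes_leafB.
Qed.

End FunctigraphRigidity.

End Broom.

Theorem lemma2p9 (t : nat) (ht : 2 <= t) :
  exists (T : finType) (e : rel T) (g : T -> T),
    simple_graph e /\ connected_graph e /\
    fix_number e = fix_number (functigraph e g) + t.
Proof.
exists (broom_vertex t), (@broom t), (@broom_map t).
split; first exact: broom_simple.
split; first exact: broom_connected.
rewrite fix_number_broom ?(ltnW ht) // fix_number_rigid // => s.
exact: aut_functigraph_broom_trivial.
Qed.
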